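(* Let $f:\Gamma\to\Gamma$ be an irreducible, expanding graph map with stacks $\mathcal{K}_1,\dots,\mathcal{K}_p$ and final edges $\alpha_1,\dots,\alpha_p$. If there is a directed path $P$ in the stack graph $\mathcal{SG}(f)$ from $\mathcal{K}_i$ to $\mathcal{K}_j$ with $s(P)=d$, then $f^d(\alpha_i)$ traverses $\alpha_j$.
   Context: A graph $\Gamma$ is a finite 1-dimensional CW complex with a chosen orientation on each edge; $\mathcal{E}\Gamma$ is its set of edges, $\bar e$ is the reverse of $e$, $\iota,\tau$ the endpoints. An edge path is a nonempty concatenation $u=e_1\cdots e_k$ of oriented edges with $\tau(e_i)=\iota(e_{i+1})$; $|u|=k$ (no cancellation); $u$ traverses $e$ if $e$ or $\bar e$ occurs in it. A graph map $f:\Gamma\to\Gamma$ assigns to vertices vertices and to each oriented edge $e$ an edge path $f(e)$ with $\iota(f(e))=f(\iota(e))$, $f(\bar e)=\overline{f(e)}$; powers $f^d$ are compositions, applied to paths by concatenation without tightening. $T(f)$ has $(i,j)$ entry the number of times $f(e_i)$ traverses $e_j$; $f$ is irreducible if $T(f)$ is irreducible and every vertex has valence $\ge3$; expanding if $|f^n(e)|\to\infty$ for every edge. Stacks: $e$ is mixing if $|f(e)|>1$; surplus if non-mixing and $f(e)\in\{f(u),\overline{f(u)}\}$ for some edge $u\notin\{e,\bar e\}$. Stacks are the classes of the equivalence relation on $\mathcal{E}\Gamma$ (unoriented edges) generated by $e\sim f(e)$ for $e$ non-mixing and non-surplus. Each stack has the form $\mathcal{K}=\{e,f(e),\dots,f^s(e)\}$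 with only $f^s(e)$ mixing or surplus; $f^s(e)$ is the final edge of $\mathcal{K}$. Let $\alpha_i$ be the final edge of $\mathcal{K}_i$. The stack graph $\mathcal{SG}(f)$ is the directed graph with vertex set $\{\mathcal{K}_1,\dots,\mathcal{K}_p\}$ and a directed edge $[\mathcal{K}_i,\mathcal{K}_j]$ whenever $f(\alpha_i)$ contains an edge of $\mathcal{K}_j$. The length of such an edge is $s([\mathcal{K}_i,\mathcal{K}_j])=\min\{s\ge1: f^s(\alpha_i)\text{ traverses }\alpha_j\}$. For a directed path $P=E_1\cdots E_k$ (traversing edges only in their positive direction), $s(P)=\sum_i s(E_i)$. *)

From mathcomp Require Import all_boot all_order all_algebra.
Set Implicit Arguments. Unset Strict Implicit. Unset Printing Implicit Defensive.
Import GRing.Theory.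

(* A graph: finite vertex type V, finite type E of (unoriented) edges, each
   with a chosen orientation running from [iota e] to [tau e].
   An oriented edge is a pair (e, b) : E * bool; b = false is the chosen
   orientation of e, b = true its reverse \bar e. *)
Section GraphMaps.
Variables (V E : finType) (iota tau : E -> V).

Definition oedge := (E * bool)%type.
Definition orev (o : oedge) : oedge := (o.1, ~~ o.2).
Definition ostart (o : oedge) : V := if o.2 then tau o.1 else iota o.1.
Definition oend (o : oedge) : V := if o.2 then iota o.1 else tau o.1.

Definition is_edge_path (p : seq oedge) : bool :=
  match p with
  | [::] => false
  | o :: q => path (fun a b => oend a == ostart b) o q
  end.

Definition rev_path (p : seq oedge) : seq oedge := rev (map orev p).

(* number of edge-ends at v (loops count twice) *)
Definition valence (v : V) : nat :=
  #|[pred e | iota e == v]| + #|[pred e | tau e == v]|.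

Variables (fv : V -> V) (fe : E -> seq oedge).
(* fe e = f(e) for the chosen orientation; f(\bar e) = reverse of f(e). *)

Definition fo (o : oedge) : seq oedge :=
  if o.2 then rev_path (fe o.1) else fe o.1.

Definition is_graph_map : Prop :=
  forall e : E, is_edge_path (fe e) /\
    ostart (head (e, false) (fe e)) = fv (iota e) /\
    oend (last (e, false) (fe e)) = fv (tau e).

(* f applied to an edge path, by concatenation without tightening *)
Definition fpath (p : seq oedge) : seq oedge := flatten (map fo p).

Definition fpow (d : nat) (e : E) : seq oedge := iter d fpath [:: (e, false)].

Definition traverses (p : seq oedge) (x : E) : bool := x \in map fst p.

Definition transition_matrix : 'M[nat]_#|E| :=
  \matrix_(i, j) count (fun o : oedge => o.1 == enum_val j) (fe (enum_val i)).

Definition irreducible_matrix n (M : 'M[nat]_n) : Prop :=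
  forall i j : 'I_n, exists k : nat, (0 < ((M ^+ k)%R) i j)%N.

Definition irreducible_map : Prop :=
  irreducible_matrix transition_matrix /\ forall v : V, (3 <= valence v)%N.

Definition expanding : Prop :=
  forall (e : E) (B : nat), exists N : nat,
    forall n : nat, (N <= n)%N -> (B < size (fpow n e))%N.

Definition mixing (e : E) : bool := (1 < size (fe e))%N.

Definition surplus (e : E) : bool :=
  ~~ mixing e &&
  [exists u : E, (u != e) && ((fe e == fe u) || (fe e == rev_path (fe u)))].

(* the edges that are mixing or surplus: these are the final edges of stacks *)
Definition is_final (e : E) : bool := mixing e || surplus e.

Definition stack_step : rel E :=
  fun e x => ~~ mixing e && ~~ surplus e && (map fst (fe e) == [:: x]).

Definition stack_equiv : rel E :=
  connect (fun e x => stack_step e x || stack_step x e).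

Definition stack_of (e : E) : {set E} := [set x | stack_equiv e x].

Definition is_stack (K : {set E}) : Prop := exists e, K = stack_of e.

Definition final_edge_of (K : {set E}) (alpha : E) : bool :=
  (alpha \in K) && is_final alpha.

(* directed edge [K, K'] of the stack graph, alpha the final edge of K *)
Definition SG_edge (K K' : {set E}) (alpha : E) : Prop :=
  final_edge_of K alpha /\ exists2 x, x \in K' & traverses (fe alpha) x.

(* s([K_i,K_j]) = s : the least s >= 1 with f^s(alpha_i) traversing alpha_j *)
Definition SG_length (alpha alpha' : E) (s : nat) : Prop :=
  (1 <= s)%N /\ traverses (fpow s alpha) alpha' /\
  forall t, (1 <= t)%N -> (t < s)%N -> ~~ traverses (fpow t alpha) alpha'.

(* A directed path P = E_1 ... E_k (k >= 1) in SG(f), visiting the stacks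
   K 0, ..., K k, whose final edges are a 0, ..., a k, and whose l-th edge
   E_(l+1) = [K l, K (l+1)] has length s l.  Then s(P) = \sum_(l < k) s l. *)
Definition SG_path (k : nat) (K : nat -> {set E}) (a : nat -> E)
    (s : nat -> nat) : Prop :=
  [/\ (1 <= k)%N,
      forall l, (l <= k)%N -> is_stack (K l) /\ final_edge_of (K l) (a l)
    & forall l, (l < k)%N ->
        SG_edge (K l) (K l.+1) (a l) /\ SG_length (a l) (a l.+1) (s l)].

Definition path_length (k : nat) (s : nat -> nat) : nat := \sum_(l < k) s l.
End GraphMaps.

From Pilot Require Import Defs.
From mathcomp Require Import all_boot all_order all_algebra.

(* Since f^(t+s)(a) is f^t applied edge by edge to f^s(a), and reversing an
   edge only reverses its image, traversal composes: if f^s(a) traverses b and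
   f^t(b) traverses c, then f^(t+s)(a) traverses c.  Chaining this along the
   edges of the stack-graph path gives the claim. *)

Section Traversal.
Variables (E : finType) (fe : E -> seq (E * bool)).

Lemma traverses_fo (o : E * bool) : traverses (fo fe o) =1 traverses (fe o.1).
Proof.
move=> x; rewrite /traverses /fo; case: o.2 => //.
by rewrite /rev_path map_rev mem_rev -map_comp.
Qed.

(* Qualified, as a bare [fpath] is path.v's notation for function paths. *)
Lemma traverses_fpath (p : seq (E * bool)) (x : E) :
  traverses (Defs.fpath fe p) x = has (fun o => traverses (fe o.1) x) p.
Proof.
elim: p => //= o p IHp.
by rewrite -traverses_fo -IHp /traverses map_cat mem_cat.
Qed.

Lemma traverses_fpath_subset (p q : seq (E * bool)) :
  (forall x, traverses p x -> traverses q x) ->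
  forall x, traverses (Defs.fpath fe p) x -> traverses (Defs.fpath fe q) x.
Proof.
move=> sub_pq x; rewrite !traverses_fpath => /hasP [o p_o o_x].
have /mapP [o' q_o' eq_o] : o.1 \in map fst q by apply: sub_pq; apply: map_f.
by apply/hasP; exists o'; rewrite -?eq_o.
Qed.

Lemma traverses_iter_fpath_subset (t : nat) (p q : seq (E * bool)) :
  (forall x, traverses p x -> traverses q x) ->
  forall x, traverses (iter t (Defs.fpath fe) p) x ->
    traverses (iter t (Defs.fpath fe) q) x.
Proof. by elim: t => //= t IHt sub_pq; apply/traverses_fpath_subset/IHt. Qed.

Lemma traverses_fpow_trans (s t : nat) (a b c : E) :
  traverses (fpow fe s a) b -> traverses (fpow fe t b) c ->
  traverses (fpow fe (t + s) a) c.
Proof.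
move=> sab tbc; rewrite /fpow iterD.
by apply: traverses_iter_fpath_subset tbc => x; rewrite /traverses inE => /eqP ->.
Qed.

Lemma traverses_fpow_chain (k : nat) (a : nat -> E) (s : nat -> nat) :
  (forall l, l < k -> traverses (fpow fe (s l) (a l)) (a l.+1)) ->
  traverses (fpow fe (\sum_(l < k) s l) (a 0)) (a k).
Proof.
elim: k => [|k IHk] step; first by rewrite big_ord0 /traverses /= inE.
rewrite big_ord_recr /= addnC.
by apply: traverses_fpow_trans (step k _) => //; apply: IHk => l /ltnW; apply: step.
Qed.

End Traversal.

Theorem lemma4p5 (V E : finType) (iota tau : E -> V) (fv : V -> V)
    (fe : E -> seq (E * bool))
    (Hmap : is_graph_map iota tau fv fe)
    (Hirr : irreducible_map iota tau fe)
    (Hexp : expanding fe)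
    (k : nat) (K : nat -> {set E}) (a : nat -> E) (s : nat -> nat) (d : nat)
    (HP : SG_path fe k K a s)
    (Hd : path_length k s = d) :
  traverses (fpow fe d (a 0)) (a k).
Proof.
case: HP => _ _ edges; rewrite -Hd.
apply: traverses_fpow_chain => l lt_lk.
by have [_ [_ []]] := edges l lt_lk.
Qed.
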